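(* Let $m$ be a positive integer and $G$ a finite soluble group such that $|\mathscr R(g)|\le m$ for all $g\in G$. Then the exponent of $G/F(G)$ divides $m!$, where $F(G)$ is the Fitting subgroup of $G$.
   Context: Commutators: $a^b=b^{-1}ab$, $[a,b]=a^{-1}b^{-1}ab$, and $[a,{}_nb]=[\dots[[a,b],b],\dots,b]$ with $b$ repeated $n$ times. For $g$ in a finite group $G$, the right Engel sink $\mathscr R(g)$ is the smallest set $\mathscr R\subseteq G$ such that for every $x\in G$ there is $r(x)\ge1$ with $[g,{}_nx]\in\mathscr R$ for all $n\ge r(x)$. $F(G)$ is the largest nilpotent normal subgroup of $G$. *)

From HB Require Import structures.
From mathcomp Require Import all_boot all_fingroup all_solvable.
Set Implicit Arguments.
Unset Strict Implicit.
Unset Printing Implicit Defensive.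
Local Open Scope group_scope.

(* Iterated commutator [g, _n x] = [...[[g,x],x],...,x] (x repeated n times).
   MathComp's [~ a, b] is a^-1 * a ^ b = a^-1 b^-1 a b. *)
Definition itcomm (gT : finGroupType) (g x : gT) (n : nat) : gT :=
  iter n (fun y => [~ y, x]) g.

Definition is_right_sink (gT : finGroupType) (G : {set gT}) (g : gT)
    (R : {set gT}) : Prop :=
  forall x, x \in G -> exists2 r : nat, (1 <= r)%N &
    forall n : nat, (r <= n)%N -> itcomm g x n \in R.

Definition is_smallest_right_sink (gT : finGroupType) (G : {set gT}) (g : gT)
    (R : {set gT}) : Prop :=
  is_right_sink G g R /\
  forall R' : {set gT}, is_right_sink G g R' -> R \subset R'.

From HB Require Import structures.
From mathcomp Require Import all_boot all_fingroup all_solvable.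
From mathcomp Require Import boolp.
Set Implicit Arguments.
Unset Strict Implicit.
Unset Printing Implicit Defensive.
Local Open Scope group_scope.

(* For an element a of an abelian normal subgroup N on which x acts coprimely,
   commutation with x^j is injective on [N, x^j] (as C_[N, x^j](x^j) = 1), hence
   a permutation of it, so [a, x^j] recurs
   along the Engel sequence [a, _n x^j] and lies in the Engel sink of a.  The
   m + 1 values [a, x^j], 0 <= j <= m, therefore cannot be distinct; hence some
   x^k with 0 < k <= m, and so x^(m!), centralises a.  Inducting on |G| through a
   minimal normal p-subgroup N, this shows that x^(m!) lies in O_q(G) for every
   q-element x of G (when p <> q, x^(m!) centralises N and C_L(N) is nilpotent for
   L/N = O_q(G/N)).  Since F(G) contains every O_q(G), x^(m!) lies in F(G). *)

Lemma pigeonhole_nat (T : finType) (R : {set T}) (f : nat -> T) n :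
  (#|R| < n)%N -> (forall i, (i < n)%N -> f i \in R) ->
  exists i j, [/\ (i < j)%N, (j < n)%N & f i = f j].
Proof.
move=> ltRn fR; pose g (i : 'I_n) := f i.
have /injectivePn[i [j neq_ij eq_fij]] : ~~ injectiveb g.
  apply/injectiveP=> inj_g; suff: (n <= #|R|)%N by rewrite leqNgt ltRn.
  rewrite -[n]card_ord -cardsT -(card_imset _ inj_g).
  by apply/subset_leq_card/subsetP=> _ /imsetP[i _ ->]; apply: fR.
case: (ltngtP i j) => [lt_ij|lt_ji|/val_inj eq_ij]; last by rewrite eq_ij eqxx in neq_ij.
  by exists i, j.
by exists j, i.
Qed.

Lemma iter_injective_periodic (T : finType) (B : {set T}) (f : T -> T) u :
  {in B &, injective f} -> (forall v, v \in B -> f v \in B) -> u \in B ->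
  exists2 k, (0 < k)%N & iter k f u = u.
Proof.
move=> inj_f fB Bu.
have iterB n v : v \in B -> iter n f v \in B.
  by elim: n => //= n IHn /IHn/fB.
have iter_inj n v w : v \in B -> w \in B -> iter n f v = iter n f w -> v = w.
  elim: n v w => //= n IHn v w Bv Bw eq_fvw.
  by apply: IHn => //; apply: inj_f eq_fvw; apply: iterB.
have [i [j [lt_ij _ eq_ij]]] := @pigeonhole_nat _ B (fun i => iter i f u) #|B|.+1 (ltnSn _)
  (fun i _ => iterB i u Bu).
exists (j - i)%N; first by rewrite subn_gt0.
apply: (iter_inj i) => //; first exact: iterB.
by rewrite -iterD subnKC ?(ltnW lt_ij).
Qed.

Section RightSinks.

Variable gT : finGroupType.
Implicit Types (G N : {group gT}) (g x z a : gT) (R : {set gT}).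

Lemma itcommSr g x n : itcomm g x n.+1 = itcomm [~ g, x] x n.
Proof. exact: iterSr. Qed.

Lemma itcommD g x m n : itcomm g x (m + n) = itcomm (itcomm g x n) x m.
Proof. exact: iterD. Qed.

Lemma groupItcomm G g x n : g \in G -> x \in G -> itcomm g x n \in G.
Proof. by move=> Gg Gx; elim: n => //= n IHn; rewrite groupR. Qed.

(* The smallest right sink of g is the set of values that recur infinitely
   often along some sequence [g, _n x], x in G. *)
Definition recurs g x y := forall r, exists2 n, (r <= n)%N & itcomm g x n = y.

Lemma exists_smallest_right_sink (G : {set gT}) g :
  exists R, is_smallest_right_sink G g R.
Proof.
exists [set y | `[< exists2 x, x \in G & recurs g x y >]]; split=> [x Gx|R' sinkR'].
  have /choice[r r_bound] y : exists r,
      recurs g x y \/ forall n, (r <= n)%N -> itcomm g x n <> y.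
    have [recy|/existsNP[r not_rec]] := pselect (recurs g x y); first by exists 0%N; left.
    by exists r; right=> n le_rn eq_n; apply: not_rec; exists n.
  exists (maxn 1 (\max_y r y)) => [|n]; first exact: leq_maxl.
  rewrite geq_max => /andP[_ le_rn]; rewrite inE; apply/asboolP; exists x => //.
  by case: (r_bound (itcomm g x n)) => // /(_ n (leq_trans (leq_bigmax _) le_rn)).
apply/subsetP=> y; rewrite inE => /asboolP[x Gx rec_y].
have [r _ sink_r] := sinkR' x Gx.
by have [n le_rn <-] := rec_y r; apply: sink_r.
Qed.

Definition right_sinks_bounded (G : {set gT}) m :=
  forall g, g \in G -> exists2 R, is_right_sink G g R & (#|R| <= m)%N.

Lemma right_sinks_bounded_smallest (G : {set gT}) m :
  (forall g, g \in G -> forall R, is_smallest_right_sink G g R -> (#|R| <= m)%N) ->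
  right_sinks_bounded G m.
Proof.
move=> bound_m g Gg; have [R smallR] := exists_smallest_right_sink G g.
by exists R; [case: smallR | apply: bound_m smallR].
Qed.

Lemma periodic_commg_in_right_sink (G : {set gT}) g z R k :
  is_right_sink G g R -> z \in G -> (0 < k)%N ->
  itcomm [~ g, z] z k = [~ g, z] -> [~ g, z] \in R.
Proof.
move=> sinkR Gz k_gt0 per_k; have [r _ sink_r] := sinkR z Gz.
have per_kt t : itcomm [~ g, z] z (k * t) = [~ g, z].
  by elim: t => [|t IHt]; rewrite ?muln0 // mulnS itcommD IHt.
rewrite -(per_kt r) -itcommSr; apply: sink_r.
by rewrite (leq_trans (leq_pmull r k_gt0)).
Qed.

Lemma commg_injective_coprime_abelian N z :
  abelian N -> z \in 'N(N) -> coprime #|N| #[z] ->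
  {in [~: N, <[z]> ] &, injective (fun u => [~ u, z])}.
Proof.
move=> cNN nNz coNz u v Bu Bv /= eq_uv.
have nNZ : <[z]> \subset 'N(N) by rewrite cycle_subG.
have : v * u^-1 \in 'C_([~: N, <[z]> ])(<[z]>).
  rewrite inE groupM ?groupV //= cent_cycle; apply/cent1P/commgP/conjg_fixP.
  by rewrite conjMg conjVg !conjg_mulR eq_uv invMg mulgA mulgK.
by rewrite (coprime_abel_cent_TI nNZ coNz cNN) inE -eq_mulgV1 eq_sym => /eqP.
Qed.

Lemma commg_periodic_coprime_abelian N z a :
  abelian N -> z \in 'N(N) -> coprime #|N| #[z] -> a \in N ->
  exists2 k, (0 < k)%N & itcomm [~ a, z] z k = [~ a, z].
Proof.
move=> cNN nNz coNz Na.
have sBN : [~: N, <[z]> ] \subset N by rewrite commg_subl cycle_subG.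
have commB u : u \in N -> [~ u, z] \in [~: N, <[z]> ] by move=> Nu; rewrite mem_commg ?cycle_id.
apply: iter_injective_periodic (commg_injective_coprime_abelian cNN nNz coNz) _ _.
  by move=> u /(subsetP sBN)/commB.
exact: commB.
Qed.

Lemma expg_fact_cent_coprime_abelian G N x m :
  N <| G -> abelian N -> x \in G -> coprime #|N| #[x] -> right_sinks_bounded G m ->
  x ^+ m`! \in 'C(N).
Proof.
move=> nsNG cNN Gx coNx bounded_m; apply/centP=> a Na.
have [R sinkR card_R] := bounded_m a (subsetP (normal_sub nsNG) a Na).
have commR j : [~ a, x ^+ j] \in R.
  have nNxj : x ^+ j \in 'N(N) by rewrite (subsetP (normal_norm nsNG)) ?groupX.
  have coNxj : coprime #|N| #[x ^+ j] by apply: coprime_dvdr coNx; apply: orderXdvd.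
  have [k k_gt0 per_k] := commg_periodic_coprime_abelian cNN nNxj coNxj Na.
  exact: periodic_commg_in_right_sink sinkR (groupX j Gx) k_gt0 per_k.
have [i [j [lt_ij lt_jm eq_ij]]] :=
  @pigeonhole_nat _ R (fun j => [~ a, x ^+ j]) m.+1 card_R (fun j _ => commR j).
have cax : commute a (x ^+ (j - i)).
  apply/commgP/conjg_fixP/(@conjg_inj _ (x ^+ i)).
  rewrite -conjgM -expgD subnK ?(ltnW lt_ij) //.
  by move: eq_ij; rewrite !commgEl => /mulgI.
have /dvdnP[e ->] : (j - i %| m`!)%N.
  by rewrite dvdn_fact // subn_gt0 lt_ij (leq_trans (leq_subr _ _)).
by rewrite mulnC expgM; apply/commute_sym/commuteX.
Qed.

End RightSinks.

Lemma morph_itcomm (aT rT : finGroupType) (D : {group aT}) (f : {morphism D >-> rT}) g x n :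
  g \in D -> x \in D -> f (itcomm g x n) = itcomm (f g) (f x) n.
Proof.
by move=> Dg Dx; elim: n => //= n IHn; rewrite morphR ?groupItcomm // IHn.
Qed.

Lemma right_sinks_bounded_morphim (aT rT : finGroupType) (D G : {group aT})
    (f : {morphism D >-> rT}) m :
  right_sinks_bounded G m -> right_sinks_bounded (f @* G) m.
Proof.
move=> bounded_m _ /morphimP[g Dg Gg ->].
have [R sinkR card_R] := bounded_m g Gg.
exists (f @: R); last exact: leq_trans (leq_imset_card _ _) card_R.
move=> _ /morphimP[x Dx Gx ->]; have [r r_gt0 sink_r] := sinkR x Gx.
by exists r => // n le_rn; rewrite -morph_itcomm // imset_f ?sink_r.
Qed.

Lemma mem_pcore_quotient_pgroup (gT : finGroupType) pi (G N : {group gT}) y :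
  N <| G -> pi.-group N -> y \in 'N(N) -> coset N y \in 'O_pi(G / N) ->
  y \in 'O_pi(G).
Proof.
move=> nsNG piN nNy; rewrite pquotient_pcore // => /(mem_morphpre nNy).
rewrite quotientK ?(subset_trans (pcore_sub _ _) (normal_norm nsNG)) //.
by rewrite mulSGid // pcore_max.
Qed.

Lemma mem_pcore_quotient_cent (gT : finGroupType) (q : nat) (G N : {group gT}) y :
  N <| G -> abelian N -> y \in 'C(N) -> q.-elt y -> coset N y \in 'O_q(G / N) ->
  y \in 'O_q(G).
Proof.
move=> nsNG cNN cNy qy OqGNy.
have nNy : y \in 'N(N) := subsetP (cent_sub N) y cNy.
set L := coset N @*^-1 'O_q(G / N).
have nsLG : L <| G by rewrite -(quotientGK nsNG) cosetpre_normal pcore_normal.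
have sNL : N \subset L by rewrite -{1}(ker_coset N); apply: ker_sub_pre.
have qLN : q.-group (L / N) by rewrite cosetpreK pcore_pgroup.
set C := 'C_L(N).
have nsCG : C <| G.
  rewrite /normal (subset_trans (subsetIl _ _) (normal_sub nsLG)) /=.
  by rewrite normsI ?norms_cent ?normal_norm.
have sNC : N \subset C by rewrite subsetI sNL.
have sNZ : N \subset 'Z(C) by rewrite subsetI sNC centsC subsetIr.
have nilC : nilpotent C.
  rewrite -quotient_center_nil; apply: (pgroup_nil (p := q)).
  rewrite /pgroup card_quotient ?normal_norm ?center_normal //.
  apply: pnat_dvd (indexgS C sNZ) _.
  rewrite -card_quotient; last exact: subset_trans (subsetIl _ _) (morphpre_sub _ _).
  by apply: pgroupS qLN; apply: quotientS; apply: subsetIl.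
have Cy : y \in C by rewrite inE mem_morphpre.
have OqCy : y \in 'O_q(C).
  by rewrite (mem_normal_Hall (nilpotent_pcore_Hall q nilC) (pcore_normal q C) Cy).
exact: subsetP (pcore_max (pcore_pgroup q C) (gFnormal_trans _ nsCG)) y OqCy.
Qed.

Lemma expg_fact_mem_pcore (gT : finGroupType) (G : {group gT}) m (q : nat) x :
  solvable G -> right_sinks_bounded G m -> x \in G -> q.-elt x ->
  x ^+ m`! \in 'O_q(G).
Proof.
move: {2}_.+1 (ltnSn #|G|) => n; elim: n gT G x => // n IHn gT G x.
rewrite ltnS => leGn solG bounded_m Gx qx.
have [G1 | ntG] := eqVneq G 1%G.
  by move: Gx; rewrite G1 inE => /eqP->; rewrite expg1n group1.
have [N minN sNG] := minnormal_exists ntG (normG G).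
have [nNG ntN abelN] := minnormal_solvable minN sNG solG.
have nsNG : N <| G by rewrite /normal sNG nNG.
have nNx : x \in 'N(N) := subsetP nNG x Gx.
have OqGNy : coset N (x ^+ m`!) \in 'O_q(G / N).
  rewrite morphX //; apply: IHn; rewrite ?quotient_sol ?mem_quotient //.
  - exact: leq_trans (ltn_quotient ntN sNG) leGn.
  - exact: right_sinks_bounded_morphim.
  - exact: morph_p_elt.
have pN := abelem_pgroup abelN; have cNN := abelem_abelian abelN.
have [eq_pq | neq_pq] := eqVneq (pdiv #|N|) q.
  by rewrite eq_pq in pN; apply: mem_pcore_quotient_pgroup pN (groupX _ nNx) OqGNy.
apply: (mem_pcore_quotient_cent nsNG cNN _ (p_eltX _ qx) OqGNy).
apply: expg_fact_cent_coprime_abelian nsNG cNN Gx _ bounded_m.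
apply: pnat_coprime pN (sub_in_pnat _ qx) => r _.
by rewrite !inE => /eqP->; rewrite eq_sym.
Qed.

Theorem lemma3p6 (gT : finGroupType) (G : {group gT}) (m : nat) :
  (0 < m)%N -> solvable G ->
  (forall g, g \in G -> forall R : {set gT},
      is_smallest_right_sink G g R -> (#|R| <= m)%N) ->
  (exponent (G / 'F(G)) %| m`!)%N.
Proof.
move=> _ solG sink_bound; have bounded_m := right_sinks_bounded_smallest sink_bound.
apply/exponentP=> _ /morphimP[x nFx Gx ->]; rewrite -morphX //; apply: coset_id.
rewrite -(prod_constt (x ^+ m`!)); apply: group_prod => q _.
rewrite consttX; apply: (subsetP (pcore_sub q 'F(G))); rewrite p_core_Fitting.
apply: expg_fact_mem_pcore solG bounded_m _ (p_elt_constt q x).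
by apply: (subsetP _ _ (cycle_constt q x)); rewrite cycle_subG.
Qed.
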